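(* Fix a capacity $q$, a reservation vector $\kappa$ and a hierarchical horizontal type correspondence $\rho$. The hierarchical choice rule $A\mapsto C^h(A,\kappa,\rho)$ satisfies (i) the substitutes property: for every set $A$ of individuals and distinct individuals $i,j\notin A$, if $i\in C^h(A\cup\{i,j\},\kappa,\rho)$ then $i\in C^h(A\cup\{i\},\kappa,\rho)$; and (ii) size monotonicity: for every $A$ and every individual $i$, $|C^h(A,\kappa,\rho)|\le|C^h(A\cup\{i\},\kappa,\rho)|$.
   Context: Setting. $I$ is a finite set of individuals with a strict merit ranking $\succ$. $H=\{h_1,\dots,h_L\}$ is a set of horizontal types and $\rho(i)\subseteq H$ is the set of horizontal types of $i$; $\rho^{-1}(h)=\{i:h\in\rho(i)\}$. Hierarchical: for any $h,h'$ with $\rho^{-1}(h)\cap\rho^{-1}(h')\neq\emptyset$, either $\rho^{-1}(h)\subsetneq\rho^{-1}(h')$ or $\rho^{-1}(h')\subsetneq\rho^{-1}(h)$; in the latter case $h$ contains $h'$. There are $q$ positions and $\kappa_j\in\mathbb{Z}_+$ positions reserved for $h_j$; a chosen individual counts against every type she has. Hierarchical choice rule $C^h(A,\kappa,\rho)$: Step 1: let $H^1$ be the types containing no other type. If no individual in $A$ has any horizontal type, choose the $\min(q,|A|)$ highest-ranked individuals and stop. Otherwise, for each $h_j\in H^1$ (in a fixed order, never exceeding the remaining positions), choose all not-yet-chosen individuals of $A$ of type $h_j$ if there are at most $\kappa_j$ of them, and otherwise the $\kappa_j$ highest-ranked; reduce the available positions and the reservation of every type containing $h_j$ by the number chosen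 (floored at $0$); remove $h_j$. Step $n\ge2$: stop if no positions or individuals remain; if no type remains, fill remaining positions with the highest-ranked remaining individuals and stop; otherwise let $H^n$ be the remaining types containing no other remaining type and process each $h_j\in H^n$ as in Step 1 with the updated reservation. $C^h(A,\kappa,\rho)$ is the set of all individuals chosen. *)

From mathcomp Require Import all_boot.
Set Implicit Arguments. Unset Strict Implicit. Unset Printing Implicit Defensive.

Section Hier.
Variables (I H : finType).
(* merit ranking: rk i < rk j  means  i is ranked higher than j (i ≻ j) *)
Variable rk : I -> nat.
Variable rho : I -> {set H}.
Variable q : nat.
Variable kappa : H -> nat.

Definition typ (h : H) : {set I} := [set i | h \in rho i].

Definition overlap (h h' : H) : bool := [exists i, (h \in rho i) && (h' \in rho i)].

Definition contains (h h' : H) : bool := overlap h h' && (typ h' \proper typ h).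

Definition hierarchical : Prop :=
  forall h h', h != h' -> overlap h h' ->
    typ h \proper typ h' \/ typ h' \proper typ h.

(* the k highest-ranked members of S (all of S if |S| <= k) *)
Definition top (k : nat) (S : {set I}) : {set I} :=
  [set x in S | #|[set y in S | rk y < rk x]| < k].

(* state while processing: chosen set, available positions, current reservations *)
Definition pstate := ({set I} * nat * (H -> nat))%type.

Definition proc (A : {set I}) (st : pstate) (h : H) : pstate :=
  let: (C, p, res) := st in
  let av := [set i in A :\: C | h \in rho i] in
  let k := minn p (minn #|av| (res h)) in
  (C :|: top k av, p - k, fun h' => if contains h' h then res h' - k else res h').

Definition minimal_types (remT : {set H}) : {set H} :=
  [set h in remT | [forall h' in remT, ~~ contains h h']].

Definition level (A : {set I}) (remT : {set H}) (st : pstate) : pstate * {set H} :=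
  let Hn := minimal_types remT in
  (foldl (fun st h => if h \in Hn then proc A st h else st) st (enum H), remT :\: Hn).

(* full state: processing state, remaining types, stopped flag *)
Definition fstate := (pstate * {set H} * bool)%type.

Definition stepn (A : {set I}) (s : fstate) : fstate :=
  let: (st, remT, done) := s in
  if done then s else
  let: (C, p, res) := st in
  if (p == 0) || (A :\: C == set0) then (st, remT, true)
  else if remT == set0 then ((C :|: top p (A :\: C), 0, res), remT, true)
  else let: (st', remT') := level A remT st in (st', remT', false).

(* the hierarchical choice rule C^h(A, kappa, rho); #|H|.+1 steps suffice since
   each step n >= 2 either stops or removes a nonempty level of types *)
Definition Ch (A : {set I}) : {set I} :=
  if [forall i in A, rho i == set0] then top q A
  else
    let: (st1, rem1) := level A setT (set0, q, kappa) in
    let: (stf, _, _) := iter #|H|.+1 (stepn A) (st1, rem1, false) in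
    let: (C, _, _) := stf in C.

End Hier.

From mathcomp Require Import all_boot zify.
Set Implicit Arguments. Unset Strict Implicit. Unset Printing Implicit Defensive.

(** Processing a type spends exactly as many positions as it chooses individuals, and the final
    step fills the remaining positions as far as possible, so [Ch A] has [minn q #|A|] elements;
    size monotonicity follows.

    For the substitutes property, run the rule on [X] and on [Y = j |: X] side by side. At every
    stage the chosen sets satisfy [b |: CY = j |: CX] for some [b]: the run on [Y] has chosen [j]
    where the run on [X] chose [b] ([b = j] and [b \in CY] are allowed). While positions remain,
    [b] has the same types as [j] among the types still to be processed, so both runs see the same
    reservations and budgets, and each processing step again differs by at most one exchange.
    A type is processed only when it is minimal, and then the hierarchy forces all its members to
    share every remaining type, which keeps the newly exchanged individual aligned with [j]. Hence
    every [i != j] chosen from [Y] is chosen from [X]. *)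

Lemma card_subset_succ (T : finType) (A B : {set T}) :
  A \subset B -> #|B| = #|A|.+1 -> exists2 w, w \notin A & B = w |: A.
Proof.
move=> AB cB; have /cards1P[w Dw] : #|B :\: A| == 1.
  by rewrite cardsDS // cB subSnn.
have wA : w \notin A by have := set11 w; rewrite -Dw inE => /andP[].
exists w => //; apply/esym/eqP; rewrite eqEcard cardsU1 wA cB leqnn andbT.
rewrite subUset AB andbT sub1set.
by have := set11 w; rewrite -Dw inE => /andP[_ ->].
Qed.

Lemma cardsU_disjoint (T : finType) (A B : {set T}) :
  B \subset ~: A -> #|A :|: B| = #|A| + #|B|.
Proof. by move=> BA; apply/eqP; rewrite (leq_card_setU A B).2 disjoint_sym disjoints_subset. Qed.

Lemma subset_diff (T : finType) (A B C : {set T}) : C \subset A :\: B -> C \subset ~: B.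
Proof. by move/subset_trans; apply; rewrite setDE subsetIr. Qed.

Lemma setIdU1 (T : finType) (P : pred T) y (S : {set T}) :
  [set x in y |: S | P x] = if P y then y |: [set x in S | P x] else [set x in S | P x].
Proof.
by case Py: (P y); apply/setP => x; rewrite !inE; case: eqP => // ->; rewrite Py ?andbF.
Qed.

Lemma cardsU1I (T : finType) y (A B : {set T}) :
  y \notin A -> #|(y |: A) :&: B| = (y \in B) + #|A :&: B|.
Proof.
move=> yA; have -> : (y |: A) :&: B = if y \in B then y |: (A :&: B) else A :&: B.
  by case: ifP => yB; apply/setP => x; rewrite !inE; case: eqP => // ->; rewrite yB ?andbF.
by case: ifP => yB; rewrite ?cardsU1 // inE (negbTE yA).
Qed.

Lemma exchange_setU1 (T : finType) (j b w : T) (A B C D : {set T}) :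
  b |: B = j |: A -> w |: D = b |: C -> w |: (B :|: D) = j |: (A :|: C).
Proof. by move=> eB eD; rewrite setUCA eD setUCA setUA eB setUA. Qed.

Lemma grow_setU1 (T : finType) (j w : T) (A B C D : {set T}) :
  B = j |: A -> C = w |: D -> w |: (B :|: D) = j |: (A :|: C).
Proof. by move=> -> ->; rewrite setUCA !setUA. Qed.

Section Top.
Variables (I : finType) (rk : I -> nat).
Hypothesis rk_inj : injective rk.
Local Notation top := (top rk).
Implicit Types (S : {set I}) (k : nat).

Lemma in_top k S x : (x \in top k S) = (x \in S) && (#|[set y in S | rk y < rk x]| < k).
Proof. by rewrite inE. Qed.

Lemma top_subset k S : top k S \subset S.
Proof. by apply/subsetP => x; rewrite in_top => /andP[]. Qed.

Lemma top_mono k k' S : k <= k' -> top k S \subset top k' S.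
Proof.
move=> le; apply/subsetP => x; rewrite !in_top => /andP[-> lt].
exact: leq_trans lt le.
Qed.

Lemma mem_top_subset k S (S' : {set I}) x :
  S \subset S' -> x \in S -> x \in top k S' -> x \in top k S.
Proof.
move=> sub xS; rewrite !in_top xS => /andP[_]; apply: leq_ltn_trans.
apply: subset_leq_card; apply/subsetP => y; rewrite !inE => /andP[yS ->].
by rewrite (subsetP sub).
Qed.

Lemma top0 S : top 0 S = set0.
Proof. by apply/setP => x; rewrite in_top ltn0 andbF inE. Qed.

Lemma card_top k S : #|top k S| = minn k #|S|.
Proof.
move cS: #|S| => n; elim: n S cS => [|n IH] S cS.
  by apply/eqP; rewrite minn0 -leqn0 -cS subset_leq_card ?top_subset.
have [x0 x0S] : {x0 | x0 \in S} by apply/sigW/card_gt0P; rewrite cS.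
have [m mS mmax] : exists2 m, m \in S & forall y, y \in S -> rk y <= rk m.
  by case: (arg_maxnP rk x0S) => m; exists m.
have cSm : #|S :\ m| = n by move: cS; rewrite (cardsD1 m) mS => -[].
have rank_m : #|[set y in S | rk y < rk m]| = n.
  rewrite -cSm; apply: eq_card => y; rewrite !inE andbC.
  have [-> | ym] /= := eqVneq y m; first by rewrite ltnn.
  case yS: (y \in S); rewrite ?andbF ?andbT //=.
  rewrite ltn_neqAle mmax // andbT.
  by apply: contra ym => /eqP/rk_inj/eqP.
have topSm : top k S :\ m = top k (S :\ m).
  apply/setP => x; rewrite !inE; have [// | xm] /= := eqVneq x m.
  case xS: (x \in S) => //=; congr (_ < k); apply: eq_card => y; rewrite !inE.
  have [-> | //] := eqVneq y m; by rewrite mS ltnNge mmax.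
rewrite (cardsD1 m) topSm IH // in_top mS rank_m; lia.
Qed.

Lemma top_id k S : #|S| <= k -> top k S = S.
Proof. by move=> le; apply/eqP; rewrite eqEcard top_subset card_top leq_min le leqnn. Qed.

Lemma top_minn k S : top (minn k #|S|) S = top k S.
Proof.
by case: leqP => [// | /ltnW le]; rewrite !top_id.
Qed.

Lemma top_succ k S :
  top k.+1 S = top k S \/ exists2 w, w \notin top k S & top k.+1 S = w |: top k S.
Proof.
case: (leqP #|S| k) => [le | lt]; first by left; rewrite !top_id // ltnW.
right; apply: card_subset_succ; first exact: top_mono.
by rewrite !card_top !(minn_idPl _) // ltnW.
Qed.

(* Adding a candidate [y] either leaves the top [k] unchanged, adds [y] to it, or exchanges one
   of its members [w] for [y]. *)
Lemma top_setU1 k S y : y \notin S ->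
  exists2 w, w \in y |: top k S & w |: top k (y |: S) = y |: top k S.
Proof.
move=> yS; set T := top k S; set T' := top k (y |: S).
have T'T : T' :\ y \subset T.
  apply/subsetP => x; rewrite in_setD1 => /andP[xy xT'].
  have xS : x \in S by move: (subsetP (top_subset _ _) x xT'); rewrite in_setU1 (negbTE xy).
  exact: mem_top_subset (subsetUr _ _) xS xT'.
have cT' : #|T'| = minn k #|S|.+1 by rewrite card_top cardsU1 yS.
have cT : #|T| = minn k #|S| by rewrite card_top.
case yT': (y \in T'); last first.
  exists y; first exact: setU11.
  have e : T' = T.
    apply/eqP; rewrite eqEcard cT cT' leq_min geq_minl geq_min leqnSn orbT !andbT.
    apply/subsetP => x xT'; apply: (subsetP T'T); rewrite in_setD1 xT' andbT.
    by apply: contraFneq yT' => <-.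
  by rewrite e.
case: (ltnP #|S| k) => [lt | le].
  exists y; first exact: setU11.
  by rewrite /T' /T !top_id ?setUA ?setUid ?cardsU1 ?yS // ltnW.
have [w wT' Tw] : exists2 w, w \notin T' :\ y & T = w |: (T' :\ y).
  apply: card_subset_succ T'T _.
  move: cT'; rewrite cT (cardsD1 y T') yT' add1n; lia.
exists w; first by rewrite Tw !in_setU1 eqxx orbT.
by rewrite Tw setUCA (setD1K yT').
Qed.
End Top.

Section Hierarchical.
Variables (I H : finType) (rk : I -> nat).
Hypothesis rk_inj : injective rk.
Variable rho : I -> {set H}.
Hypothesis hier : hierarchical rho.
Variables (q : nat) (kappa : H -> nat).

Local Notation typ := (typ rho).
Local Notation contains := (contains rho).
Local Notation top := (top rk).
Local Notation proc := (proc rk rho).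
Local Notation level := (level rk rho).
Local Notation minimal_types := (minimal_types rho).
Implicit Types (A C S T CX CY TX TY : {set I}) (U V : {set H}) (st : pstate I H).

Lemma in_typ h x : (x \in typ h) = (h \in rho x).
Proof. by rewrite inE. Qed.

Lemma overlap_contains h h' x : h' != h -> ~~ contains h h' ->
  h \in rho x -> h' \in rho x -> contains h' h.
Proof.
move=> neq nc xh xh'.
have ov h1 h2 : h1 \in rho x -> h2 \in rho x -> overlap rho h1 h2.
  by move=> x1 x2; apply/existsP; exists x; rewrite x1 x2.
case: (hier neq (ov _ _ xh' xh)) => pr; last by apply/andP; split; [exact: ov | ].
by case/nandP: nc => /negP[]; [exact: ov | exact: pr].
Qed.

Definition minimal U h := forall h', h' \in U -> ~~ contains h h'.

Definition same_types U (x y : I) := forall h, h \in U -> (h \in rho x) = (h \in rho y).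

Lemma same_types_minimal U h x y : minimal U h -> h \in rho x -> h \in rho y ->
  same_types (U :\ h) x y.
Proof.
move=> hmin xh yh h'; rewrite in_setD1 => /andP[neq h'U].
have incl z z' : h \in rho z -> h \in rho z' -> h' \in rho z -> h' \in rho z'.
  move=> zh z'h zh'; have /andP[_ /proper_sub sub] := overlap_contains neq (hmin _ h'U) zh zh'.
  by rewrite -in_typ (subsetP sub) // in_typ.
by apply/idP/idP; apply: incl.
Qed.

Lemma minimal_typesP U h : h \in minimal_types U -> minimal U h.
Proof. by rewrite inE => /andP[_ /forall_inP]. Qed.

Lemma card_level_types A U st : U != set0 -> #|(level A U st).2| < #|U|.
Proof.
case/set0Pn => h0 h0U; rewrite /level /= cardsD.
have [h hU hmin] : exists2 h, h \in U & forall h', h' \in U -> #|typ h| <= #|typ h'|.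
  by case: (arg_minnP (fun h => #|typ h|) h0U) => h; exists h.
have hmt : h \in U :&: minimal_types U.
  rewrite !inE hU; apply/forall_inP => h' h'U; apply/negP => /andP[_ /proper_card].
  by rewrite ltnNge hmin.
have : 0 < #|U :&: minimal_types U| by apply/card_gt0P; exists h.
have := subset_leq_card (subsetIl U (minimal_types U)); lia.
Qed.

Lemma level_ind2 (T1 T2 : Type) (f1 : T1 -> H -> T1) (f2 : T2 -> H -> T2)
    (P : {set H} -> T1 -> T2 -> Prop) U (x1 : T1) (x2 : T2) :
  (forall V h y1 y2, h \in V -> minimal V h -> P V y1 y2 -> P (V :\ h) (f1 y1 h) (f2 y2 h)) ->
  P U x1 x2 ->
  P (U :\: minimal_types U)
    (foldl (fun y h => if h \in minimal_types U then f1 y h else y) x1 (enum H))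
    (foldl (fun y h => if h \in minimal_types U then f2 y h else y) x2 (enum H)).
Proof.
move=> step PU; set Hn := minimal_types U.
have HnP h : h \in Hn -> h \in U /\ minimal U h.
  by move=> hHn; split; [move: hHn; rewrite inE => /andP[] | exact: minimal_typesP].
clearbody Hn.
have gen s V y1 y2 : uniq s -> V \subset U -> (forall h, h \in s -> h \in Hn -> h \in V) ->
    P V y1 y2 -> P (V :\: [set h | (h \in s) && (h \in Hn)])
      (foldl (fun y h => if h \in Hn then f1 y h else y) y1 s)
      (foldl (fun y h => if h \in Hn then f2 y h else y) y2 s).
  elim: s V y1 y2 => [|h s IH] V y1 y2 /=.
    by move=> _ _ _; congr P; apply/setP => h; rewrite !inE.
  case/andP=> hs us VU sV PV; case hHn: (h \in Hn); last first.
    have sV' h' : h' \in s -> h' \in Hn -> h' \in V by move=> h's; apply: sV; rewrite inE h's orbT.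
    have := IH V y1 y2 us VU sV' PV.
    by congr P; apply/setP => h'; rewrite !inE; case: eqP => // ->; rewrite hHn !andbF.
  have hV : h \in V by apply: sV; rewrite ?mem_head.
  have hmin : minimal V h.
    by move=> h' /(subsetP VU); apply: (HnP _ hHn).2.
  have sV' h' : h' \in s -> h' \in Hn -> h' \in V :\ h.
    move=> h's h'Hn; rewrite in_setD1 sV ?inE ?h's ?orbT // andbT.
    by apply: contraNneq hs => <-.
  have := IH _ _ _ us (subset_trans (subsetDl _ _) VU) sV' (step _ _ _ _ hV hmin PV).
  by congr P; apply/setP => h'; rewrite !inE; case: eqP => // ->; rewrite hHn andbF.
have := gen (enum H) U x1 x2 (enum_uniq _) (subxx U) (fun h _ hHn => (HnP h hHn).1) PU.
suff -> : [set h | (h \in enum H) && (h \in Hn)] = Hn by apply.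
by apply/setP => h; rewrite inE mem_enum.
Qed.


Definition fill A st : pstate I H :=
  let: (C, p, r) := st in (C :|: top p (A :\: C), 0, r).

(* The steps of [Ch] without its stopping flag: the flag is raised only in [stuck] states, from
   which no step changes the chosen set (see [agrees]). *)
Definition run_step A (t : pstate I H * {set H}) : pstate I H * {set H} :=
  let: (st, U) := t in if U == set0 then (fill A st, U) else level A U st.

Definition run A n := iter n (run_step A) (level A setT (set0, q, kappa)).

Definition state_inv A U st :=
  let: (C, p, r) := st in
  C \subset A /\ forall h, h \in U -> r h = kappa h - #|C :&: typ h|.

Lemma proc_idle A C p r h : p = 0 \/ [set i in A :\: C | h \in rho i] = set0 ->
  (proc A (C, p, r) h).1 = (C, p).
Proof. by rewrite /proc /= => -[-> | ->]; rewrite ?cards0 ?min0n ?minn0 top0 setU0 subn0. Qed.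

Definition budget st := #|st.1.1| + st.1.2.

Lemma budget_proc A st h : budget (proc A st h) = budget st.
Proof.
case: st => [[C p] r]; rewrite /proc /budget /=.
set av := [set i in A :\: C | h \in rho i]; set k := minn p _.
have Tav : top k av \subset ~: C.
  by apply: subset_trans (top_subset _ _ _) _; apply/subsetP => x; rewrite !inE => /andP[/andP[]].
rewrite cardsU_disjoint // (card_top rk_inj) /k; lia.
Qed.

Lemma state_inv_proc A U h st : h \in U -> minimal U h -> state_inv A U st ->
  state_inv A (U :\ h) (proc A st h).
Proof.
case: st => [[C p] r] hU hmin [CA res]; rewrite /proc.
set av := [set i in A :\: C | h \in rho i]; set k := minn p _; set T := top k av.
have Tav : T \subset A :\: C.
  by apply: subset_trans (top_subset _ _ _) _; apply/subsetP => x; rewrite inE => /andP[].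
have Th x : x \in T -> h \in rho x.
  by move/(subsetP (top_subset _ _ _)); rewrite inE => /andP[].
have cT : #|T| = k by rewrite (card_top rk_inj) /k; lia.
split; first by rewrite subUset CA (subset_trans Tav) ?subsetDl.
move=> h'; rewrite in_setD1 => /andP[neq h'U].
rewrite setIUl cardsU_disjoint; last first.
  apply/subsetP => x /setIP[/(subsetP Tav)]; rewrite !inE => /andP[xC _] _.
  by rewrite (negbTE xC).
rewrite res //; case: ifP => hh'.
  have /setIidPl -> : T \subset typ h'.
    apply/subsetP => x xT; have /andP[_ /proper_sub] := hh'.
    by move/subsetP; apply; rewrite in_typ Th.
  by rewrite cT subnDA.
suff /eqP -> : T :&: typ h' == set0 by rewrite cards0 addn0.
apply/set0Pn => -[x]; rewrite inE in_typ => /andP[xT xh'].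
by rewrite (overlap_contains neq (hmin _ h'U) (Th _ xT) xh') in hh'.
Qed.

Lemma state_inv_fill A U st : state_inv A U st -> state_inv A set0 (fill A st).
Proof.
case: st => [[C p] r] [CA _]; split => [|h]; last by rewrite inE.
by rewrite subUset CA (subset_trans (top_subset _ _ _)) ?subsetDl.
Qed.

Lemma card_fill A st : st.1.1 \subset A -> budget st = q -> #|(fill A st).1.1| = minn q #|A|.
Proof.
case: st => [[C p] r] /= CA; rewrite /budget /= => e; have Tdiff := top_subset rk p (A :\: C).
rewrite /= cardsU_disjoint ?(subset_diff Tdiff) // (card_top rk_inj) cardsDS //.
have := subset_leq_card CA; lia.
Qed.

Lemma level_preserves A (P : pstate I H -> Prop) U st :
  (forall st' h, P st' -> P (proc A st' h)) -> P st -> P (level A U st).1.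
Proof.
move=> HP Pst; rewrite /level /=.
apply: (@level_ind2 _ _ (proc A) (fun (u : unit) _ => u) (fun _ st _ => P st) U st tt) => //.
by move=> *; apply: HP.
Qed.

Lemma state_inv_level A U st : state_inv A U st ->
  state_inv A (level A U st).2 (level A U st).1.
Proof.
move=> inv; rewrite /level /=.
apply: (@level_ind2 _ _ (proc A) (fun (u : unit) _ => u) (fun V st _ => state_inv A V st) U st tt)
  => //.
by move=> V h st' _ hV hmin; apply: state_inv_proc.
Qed.

Lemma budget_level A U st : budget (level A U st).1 = budget st.
Proof.
by apply: (level_preserves (P := fun st' => budget st' = budget st)) => // st' h <-;
  apply: budget_proc.
Qed.

Lemma run_step_preserves A (P : pstate I H -> Prop) t :
  (forall st h, P st -> P (proc A st h)) -> (forall st, P st -> P (fill A st)) ->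
  P t.1 -> P (run_step A t).1.
Proof.
case: t => st U HP HF Pst; rewrite /run_step; case: ifP => _; first exact: HF.
exact: level_preserves.
Qed.

Lemma run_iter_preserves A (P : pstate I H -> Prop) n t :
  (forall st h, P st -> P (proc A st h)) -> (forall st, P st -> P (fill A st)) ->
  P t.1 -> P (iter n (run_step A) t).1.
Proof. by move=> HP HF; elim: n => //= n IH /IH; apply: run_step_preserves. Qed.

Definition stuck A st := st.1.2 = 0 \/ A \subset st.1.1.

Lemma proc_stuck A st h : stuck A st -> (proc A st h).1 = st.1.
Proof.
case: st => [[C p] r] /= stuck_st; apply: proc_idle.
case: stuck_st => /= [-> | AC]; [by left | right].
apply/setP => x; rewrite !inE; apply/negbTE/negP => /andP[/andP[xC xA] _].
by rewrite (subsetP AC x xA) in xC.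
Qed.

Lemma fill_stuck A st : stuck A st -> (fill A st).1 = (st.1.1, 0).
Proof.
case: st => [[C p] r] [/= -> | /= AC]; first by rewrite top0 setU0.
suff -> : A :\: C = set0 by rewrite (top_id rk_inj) ?cards0 // setU0.
by apply/eqP; rewrite setD_eq0.
Qed.

Lemma stuck_run_iter A n t : stuck A t.1 ->
  (iter n (run_step A) t).1.1.1 = t.1.1.1 /\ stuck A (iter n (run_step A) t).1.
Proof.
move=> st_t; pose P st := st.1.1 = t.1.1.1 /\ stuck A st.
apply: (@run_iter_preserves A P n t _ _ (conj erefl st_t)) => st.
  by move=> h; rewrite /P => -[eC stuck_st]; rewrite /stuck !proc_stuck.
by rewrite /P => -[eC stuck_st]; rewrite /stuck fill_stuck //; split; last by left.
Qed.

Lemma state_inv_start A : state_inv A setT (set0, q, kappa).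
Proof. by split=> [|h _]; rewrite ?sub0set // set0I cards0 subn0. Qed.

Lemma card_run_iter A n t : state_inv A t.2 t.1 -> budget t.1 = q -> #|t.2| < n ->
  #|(iter n (run_step A) t).1.1.1| = minn q #|A|.
Proof.
elim: n t => // n IH [[[C p] r] U] inv bud ltU; rewrite iterSr {2}/run_step.
case: eqP => [_ | /eqP U0].
  by rewrite (stuck_run_iter _ _).1; [apply: card_fill; case: inv | left].
apply: IH; [exact: state_inv_level | by rewrite budget_level |].
by rewrite -ltnS; apply: leq_trans ltU; apply: card_level_types.
Qed.

Lemma card_run A : #|(run A #|H|.+1).1.1.1| = minn q #|A|.
Proof.
apply: card_run_iter; first exact/state_inv_level/state_inv_start.
  by rewrite budget_level /budget cards0.
by rewrite ltnS max_card.
Qed.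

Lemma run_untyped A : [forall i in A, rho i == set0] -> (run A #|H|.+1).1.1.1 = top q A.
Proof.
move/forall_inP => untyped.
pose P st := st.1.1 = set0 /\ st.1.2 = q \/ st.1.1 = top q A /\ st.1.2 = 0.
have Pproc st h : P st -> P (proc A st h).
  case: st => [[C p] r] Pst; rewrite /P proc_idle; first exact: Pst.
  case: Pst => [[/= -> _] | [_ /= ->]]; [right | by left].
  apply/setP => x; rewrite !inE; apply/negbTE/negP => /andP[/andP[_ xA]].
  by move/eqP: (untyped x xA) => ->; rewrite inE.
have Pfill st : P st -> P (fill A st).
  by case: st => [[C p] r] [[/= -> ->] | [/= -> ->]]; right; rewrite /= ?setD0 ?set0U ?top0 ?setU0.
have Pstart : P (level A setT (set0, q, kappa)).1 by apply: level_preserves => //; left.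
have [[e _] | [-> //]] := run_iter_preserves #|H|.+1 Pproc Pfill Pstart.
have := card_run A; rewrite /run e cards0 -(card_top rk_inj) => /esym/eqP.
by rewrite cards_eq0 => /eqP.
Qed.

Definition agrees A (s : fstate I H) (t : pstate I H * {set H}) :=
  t.1.1.1 = s.1.1.1.1 /\ (if s.2 then stuck A t.1 else s.1 = t).

Lemma agrees_step A s t : agrees A s t -> agrees A (stepn rk rho A s) (run_step A t).
Proof.
case: s => [[[[C p] r] U] []] [/= eC Hs]; first by rewrite -eC; apply: (stuck_run_iter 1).
subst t; rewrite /stepn; case: ifP => [stop | _].
  apply: (stuck_run_iter 1); case/orP: stop => /eqP; [by left | right].
  by rewrite /= -setD_eq0; apply/eqP.
case: eqP => [-> | /eqP U0]; first by rewrite /run_step eqxx /stuck; split => //; left.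
by rewrite /run_step (negbTE U0).
Qed.

Lemma iter_agrees A n s t : agrees A s t ->
  agrees A (iter n (stepn rk rho A) s) (iter n (run_step A) t).
Proof. by elim: n => //= n IH /IH /agrees_step. Qed.

Lemma iter_stepn A n t :
  (let: (st, _, _) := iter n (stepn rk rho A) (t.1, t.2, false) in let: (C, _, _) := st in C)
  = (iter n (run_step A) t).1.1.1.
Proof.
have /(iter_agrees n) : agrees A (t.1, t.2, false) t by case: t.
by case: (iter _ _ (t.1, t.2, false)) => [[[[C p] r] U] d] [-> _].
Qed.

Lemma Ch_run A : Ch rk rho q kappa A = (run A #|H|.+1).1.1.1.
Proof.
rewrite /Ch; case: ifP => [/run_untyped <- // | _].
exact (iter_stepn A #|H|.+1 (level A setT (set0, q, kappa))).
Qed.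



Section Coupling.
Variables (X : {set I}) (j : I).
Hypothesis jX : j \notin X.
Local Notation Y := (j |: X).

Definition shape U CX p CY := exists b, b |: CY = j |: CX /\ (p = 0 \/ same_types U b j).

Definition coupled U (sX sY : pstate I H) :=
  ((budget sX = q /\ budget sY = q) \/ (sX.1.2 = 0 /\ sY.1.2 = 0)) /\
  shape U sX.1.1 sX.1.2 sY.1.1.

Lemma diff_budget CX CY : CY = j |: CX -> Y :\: CY = X :\: CX.
Proof.
move=> ->; apply/setP => x; rewrite !inE.
by case: eqP => [-> | _] /=; rewrite ?(negbTE jX) ?andbF.
Qed.

Lemma diff_extra b CX CY : CX \subset X -> b \notin CY -> b |: CY = j |: CX ->
  Y :\: CY = b |: (X :\: CX).
Proof.
move=> CXs bCY e; apply/setP => x; move/setP/(_ x): e; rewrite !inE.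
case: (eqVneq x b) => [-> | _] /= e.
  by rewrite (negbTE bCY); move/esym: e => /orP[/eqP -> | /(subsetP CXs) ->]; rewrite ?eqxx ?orbT.
by rewrite e; case: (eqVneq x j) => [-> | _] //=; rewrite (negbTE jX) andbF.
Qed.

Lemma coupled_notin_diff b CX CY : b |: CY = j |: CX -> b \notin X :\: CX.
Proof.
move=> eC; have : b \in j |: CX by rewrite -eC setU11.
by rewrite !inE => /orP[/eqP -> | ->]; rewrite ?(negbTE jX) ?andbF.
Qed.

Lemma coupled_mem b CX CY : b \in CY -> b |: CY = j |: CX -> CY = j |: CX.
Proof. by move=> bCY <-; apply/esym/setUidPr; rewrite sub1set. Qed.

Lemma card_coupled b CX CY : CX \subset X -> b |: CY = j |: CX -> #|CY| = #|CX| + (b \in CY).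
Proof.
move=> CXs /(congr1 (fun B : {set I} => #|B|)); rewrite !cardsU1.
have -> : j \notin CX by apply: contra jX; apply: (subsetP CXs).
by case: (b \in CY) => /=; lia.
Qed.

Section ProcStep.
Variables (U : {set H}) (h : H) (CX CY : {set I}) (pX pY : nat) (rX rY : H -> nat).
Hypotheses (hU : h \in U) (hmin : minimal U h) (CXs : CX \subset X).
Hypotheses (resX : rX h = kappa h - #|CX :&: typ h|) (resY : rY h = kappa h - #|CY :&: typ h|).
Hypotheses (budX : #|CX| + pX = q) (budY : #|CY| + pY = q).

Local Notation avX := [set i in X :\: CX | h \in rho i].
Local Notation avY := [set i in Y :\: CY | h \in rho i].
Local Notation kX := (minn pX (minn #|avX| (rX h))).
Local Notation kY := (minn pY (minn #|avY| (rY h))).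
Local Notation TX := (top kX avX).
Local Notation TY := (top kY avY).

Let jCX : j \notin CX.
Proof. by apply: contra jX; apply: (subsetP CXs). Qed.

Let TX_typed x : x \in TX -> h \in rho x.
Proof. by move/(subsetP (top_subset _ _ _)); rewrite inE => /andP[]. Qed.

Lemma shape_proc_budget : CY = j |: CX -> shape (U :\ h) (CX :|: TX) (pX - kX) (CY :|: TY).
Proof.
move=> eCY; have eav : avY = avX by rewrite (diff_budget eCY).
have ep : pX = pY.+1 by move: budX budY; rewrite eCY cardsU1 jCX; lia.
have [rXY rYX] : rY h <= rX h <= rY h + 1 /\ (h \notin rho j -> rY h = rX h).
  by rewrite resX resY eCY cardsU1I // in_typ; case: (h \in rho j) => /=; lia.
have same : TX = TY -> shape (U :\ h) (CX :|: TX) (pX - kX) (CY :|: TY).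
  move=> eT; exists j; split; last by right.
  by apply: (exchange_setU1 (b := j)); rewrite ?eT // eCY setUA setUid.
have [eT | kS] : kX = kY \/ kX = kY.+1.
  by rewrite eav ep; lia.
  by apply: same; rewrite eT eav.
have [eT | [w wTY eT]] := top_succ rk_inj kY avY.
  by apply: same; rewrite kS -eT eav.
exists w; split; first by apply: grow_setU1 eCY _; rewrite kS -eav.
case jh: (h \in rho j); last by left; move: kS; rewrite ep -rYX ?jh // eav; lia.
right; apply: same_types_minimal jh => //; apply: TX_typed.
by rewrite kS -eav eT setU11.
Qed.

Lemma shape_proc_extra b : b \notin CY -> b |: CY = j |: CX -> same_types U b j ->
  shape (U :\ h) (CX :|: TX) (pX - kX) (CY :|: TY).
Proof.
move=> bCY eC bj; have bj' : same_types (U :\ h) b j by move=> h' /setD1P[_ /bj].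
have bav := coupled_notin_diff eC.
have ep : pY = pX by move: budX budY; rewrite (card_coupled CXs eC) (negbTE bCY); lia.
have er : rY h = rX h.
  rewrite resX resY; move/(congr1 (fun B : {set I} => #|B :&: typ h|)): eC.
  by rewrite !cardsU1I // !in_typ bj // => /addnI ->.
have eavY : avY = if h \in rho b then b |: avX else avX.
  by rewrite (diff_extra CXs bCY eC) setIdU1.
case bh: (h \in rho b); rewrite bh in eavY; last first.
  by exists b; split; [apply: exchange_setU1 eC _; rewrite eavY ep er | right].
have bavX : b \notin avX by rewrite inE negb_and bav.
have [w wT eT] := top_setU1 rk_inj kY bavX.
have eTX : top kY avX = TX.
  rewrite eavY ep er cardsU1 bavX -[LHS](top_minn rk_inj); congr top; lia.
rewrite -eavY eTX in eT; rewrite eTX in wT.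
exists w; split; [exact: exchange_setU1 eC eT | right].
case/setU1P: wT => [-> // | wTX].
by apply: same_types_minimal hmin (TX_typed wTX) _; rewrite -(bj _ hU) bh.
Qed.
End ProcStep.

Lemma shape_fill U b CX pX CY pY : CX \subset X -> #|CX| + pX = q -> #|CY| + pY = q ->
  b |: CY = j |: CX -> shape U (CX :|: top pX (X :\: CX)) 0 (CY :|: top pY (Y :\: CY)).
Proof.
move=> CXs budX budY eC; case: (boolP (b \in CY)) => bCY.
  have eCY := coupled_mem bCY eC.
  have ep : pX = pY.+1 by move: budX budY; rewrite (card_coupled CXs eC) bCY; lia.
  rewrite (diff_budget eCY) ep.
  have [eT | [w _ eT]] := top_succ rk_inj pY (X :\: CX).
    by exists j; split; [apply: (exchange_setU1 (b := j)); rewrite ?eT // eCY setUA setUid | left].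
  by exists w; split; [apply: grow_setU1 | left].
have ep : pY = pX by move: budX budY; rewrite (card_coupled CXs eC) (negbTE bCY); lia.
have [w _ eT] := top_setU1 rk_inj pX (coupled_notin_diff eC).
by exists w; rewrite (diff_extra CXs bCY eC) ep; split; [apply: exchange_setU1 eC eT | left].
Qed.

Lemma coupled_proc U h sX sY : h \in U -> minimal U h ->
  state_inv X U sX -> state_inv Y U sY -> coupled U sX sY ->
  coupled (U :\ h) (proc X sX h) (proc Y sY h).
Proof.
case: sX sY => [[CX pX] rX] [[CY pY] rY] hU hmin [CXs resX] [_ resY] [spent [b [eC types]]].
case: (boolP ((pX == 0) && (pY == 0))) => [/andP[/eqP p0X /eqP p0Y] | frozen].
  rewrite /coupled /budget !proc_idle ?p0X ?p0Y; try by left.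
  by split; [right | exists b; split; [| left]].
have [budX budY] : #|CX| + pX = q /\ #|CY| + pY = q.
  by case: spent => // -[/= p0X p0Y]; rewrite p0X p0Y in frozen.
split; first by left; rewrite !budget_proc.
have {resX resY} := (resX h hU, resY h hU).
case: (boolP (b \in CY)) => bCY [resX' resY'].
  exact: shape_proc_budget hU hmin CXs resX' resY' budX budY (coupled_mem bCY eC).
have ep : pY = pX by move: budX budY; rewrite (card_coupled CXs eC) (negbTE bCY); lia.
have bj : same_types U b j by case: types => //= p0X; rewrite ep p0X in frozen.
exact (shape_proc_extra hU hmin CXs resX' resY' budX budY bCY eC bj).
Qed.

Lemma coupled_fill U U' sX sY : state_inv X U sX -> coupled U sX sY ->
  coupled U' (fill X sX) (fill Y sY).
Proof.
case: sX sY => [[CX pX] rX] [[CY pY] rY] [CXs _] [spent [b [eC _]]].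
split; first by right.
case: spent => [[budX budY] | [/= p0X p0Y]].
  exact: shape_fill CXs budX budY eC.
by exists b; rewrite /= p0X p0Y !top0 !setU0; split; last left.
Qed.

Lemma coupled_level U sX sY : state_inv X U sX -> state_inv Y U sY -> coupled U sX sY ->
  [/\ state_inv X (level X U sX).2 (level X U sX).1, state_inv Y (level X U sX).2 (level Y U sY).1
    & coupled (level X U sX).2 (level X U sX).1 (level Y U sY).1].
Proof.
move=> invX invY cpl; rewrite /level /=.
apply: (@level_ind2 _ _ (proc X) (proc Y)
  (fun V sX sY => [/\ state_inv X V sX, state_inv Y V sY & coupled V sX sY])) => //.
by move=> V h sX' sY' hV hmin [iX iY c]; split;
  [apply: state_inv_proc | apply: state_inv_proc | apply: coupled_proc].
Qed.

Definition coupled_run (tX tY : pstate I H * {set H}) :=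
  tX.2 = tY.2 /\ [/\ state_inv X tX.2 tX.1, state_inv Y tX.2 tY.1 & coupled tX.2 tX.1 tY.1].

Lemma coupled_run_step tX tY : coupled_run tX tY -> coupled_run (run_step X tX) (run_step Y tY).
Proof.
case: tX tY => [sX U] [sY _] [/= <- [iX iY c]]; rewrite /run_step.
case: eqP => [U0 | _]; last by split; [| apply: coupled_level].
by split; rewrite //= U0; split;
  [apply: state_inv_fill iX | apply: state_inv_fill iY | apply: coupled_fill iX c].
Qed.

Lemma coupled_start : coupled setT (set0, q, kappa) (set0, q, kappa).
Proof. by split; [left; rewrite /budget cards0 | exists j; split => //; right]. Qed.

Lemma run_coupled n : coupled_run (run X n) (run Y n).
Proof.
elim: n => [|n IH]; last exact: coupled_run_step.
by have [] := coupled_level (state_inv_start X) (state_inv_start Y) coupled_start.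
Qed.

Lemma run_setU1 i n : i != j -> i \in (run Y n).1.1.1 -> i \in (run X n).1.1.1.
Proof.
have [_ [_ _ [_ [b [eC _]]]]] := run_coupled n.
move=> ij iY; have : i \in b |: (run Y n).1.1.1 by rewrite in_setU1 iY orbT.
by rewrite eC in_setU1 (negbTE ij).
Qed.
End Coupling.
End Hierarchical.

Theorem proposition2 (I H : finType) (rk : I -> nat) (rk_inj : injective rk)
    (rho : I -> {set H}) (hier : hierarchical rho) (q : nat) (kappa : H -> nat) :
  (forall (A : {set I}) (i j : I), i \notin A -> j \notin A -> i != j ->
     i \in Ch rk rho q kappa (A :|: [set i; j]) ->
     i \in Ch rk rho q kappa (i |: A)) /\
  (forall (A : {set I}) (i : I),
     #|Ch rk rho q kappa A| <= #|Ch rk rho q kappa (i |: A)|).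
Proof.
split=> [A i j iA jA ij | A i].
  have jiA : j \notin i |: A by rewrite in_setU1 negb_or eq_sym ij.
  have -> : A :|: [set i; j] = j |: (i |: A).
    by apply/setP => x; rewrite !inE; case: (x == i); case: (x == j); rewrite /= ?orbT ?orbF.
  by rewrite !(Ch_run rk_inj hier); apply: run_setU1.
rewrite !(Ch_run rk_inj hier) !(card_run rk_inj hier) leq_min geq_minl.
by rewrite (leq_trans (geq_minr _ _)) // cardsU1 leq_addl.
Qed.
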